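(* Let $0=x_1<x_2<\dots<x_{K+1}=L$, and for each element $e^k=[x_k,x_{k+1}]$ let $\rho,\mu$ be smooth positive functions on $e^k$ (possibly discontinuous across element interfaces), $Z_s=\sqrt{\rho\mu}$. Let $v,\sigma$ be functions that are smooth on each $e^k\times[0,\infty)$, possibly two-valued at interior nodes; denote by a superscript $k$ and arguments $x_k^+$, $x_{k+1}^-$ the one-sided traces taken from element $e^k$. Fix $r_0,r_L\in[-1,1]$ and, for each interior node $x_k$ ($2\le k\le K$), a frictional strength $\alpha_k\in[0,\infty]$. Define boundary/interface data (''hat-variables'') as follows. (i) At $x_1=0$: $p_0=\frac12(Z_s(x_1^+)v(x_1^+)+\sigma(x_1^+))$, $\widehat v(x_1^+)=\frac{1+r_0}{Z_s(x_1^+)}p_0$, $\widehat\sigma(x_1^+)=(1-r_0)p_0$. (ii) At $x_{K+1}=L$: $q_L=\frac12(Z_s(x_{K+1}^-)v(x_{K+1}^-)-\sigma(x_{K+1}^-))$, $\widehat v(x_{K+1}^-)=\frac{1+r_L}{Z_s(x_{K+1}^-)}q_L$, $\widehat\sigma(x_{K+1}^-)=-(1-r_L)q_L$. (iii) At an interior node $x_k$: with $Z^-=Z_s(x_k^-)$, $Z^+=Z_s(x_k^+)$, $q^-=\frac12(Z^-v(x_k^-)-\sigma(x_k^-))$, $p^+=\frac12(Z^+v(x_k^+)+\sigma(x_k^+))$, $\eta_k=\frac{Z^-Z^+}{Z^-+Z^+}$, $\Phi_k=\eta_k(\frac{2}{Z^+}p^+-\frac{2}{Z^-}q^-)$, set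 $\widehat\sigma_k=\frac{\alpha_k}{\eta_k+\alpha_k}\Phi_k$ (and $\widehat\sigma_k=\Phi_k$ if $\alpha_k=\infty$), $\widehat\sigma(x_k^\pm)=\widehat\sigma_k$, $\widehat v(x_k^-)=\frac{2q^-+\widehat\sigma_k}{Z^-}$, $\widehat v(x_k^+)=\frac{2p^+-\widehat\sigma_k}{Z^+}$. Define the flux fluctuations $$F(x_k,t)=\tfrac{Z_s(x_k^+)}{2}\big(v(x_k^+)-\widehat v(x_k^+)\big)-\tfrac12\big(\sigma(x_k^+)-\widehat\sigma(x_k^+)\big),$$ $$G(x_{k+1},t)=\tfrac{Z_s(x_{k+1}^-)}{2}\big(v(x_{k+1}^-)-\widehat v(x_{k+1}^-)\big)+\tfrac12\big(\sigma(x_{k+1}^-)-\widehat\sigma(x_{k+1}^-)\big).$$ Suppose that for all test functions $\phi_v,\phi_\sigma$ which are smooth on each element, $$\sum_{k=1}^K\Big(\int_{x_k}^{x_{k+1}}\big(\rho\phi_v\partial_tv-\phi_v\partial_x\sigma\big)dx+\phi_v(x_k^+)F(x_k,t)+\phi_v(x_{k+1}^-)G(x_{k+1},t)\Big)=0,$$ $$\sum_{k=1}^K\Big(\int_{x_k}^{x_{k+1}}\big(\tfrac1\mu\phi_\sigma\partial_t\sigma-\phi_\sigma\partial_xv\big)dx-\frac{\phi_\sigma(x_k^+)}{Z_s(x_k^+)}F(x_k,t)+\frac{\phi_\sigma(x_{k+1}^-)}{Z_s(x_{k+1}^-)}G(x_{k+1},t)\Big)=0.$$ Then, with $E(t)=\sum_{k=1}^K\frac12\int_{x_k}^{x_{k+1}}\big(\rho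 v^2+\frac1\mu\sigma^2\big)dx$, $$\frac{dE}{dt}=-\sum_{k=1}^K\Big(\frac{|F(x_k,t)|^2}{Z_s(x_k^+)}+\frac{|G(x_{k+1},t)|^2}{Z_s(x_{k+1}^-)}\Big)-\sum_{k=2}^K\frac{\alpha_k}{(\eta_k+\alpha_k)^2}\Phi_k^2-\frac{1-r_0^2}{Z_s(x_1^+)}p_0^2-\frac{1-r_L^2}{Z_s(x_{K+1}^-)}q_L^2,$$ where the term $\frac{\alpha_k}{(\eta_k+\alpha_k)^2}\Phi_k^2$ is interpreted as $0$ when $\alpha_k=\infty$. In particular $\frac{dE}{dt}\le0$.
   Context: This concerns the 1D elastic wave equation $\rho\partial_tv=\partial_x\sigma$, $\frac1\mu\partial_t\sigma=\partial_xv$ on $[0,L]$ written in a penalized weak form on a partition into elements. $Z_s=\sqrt{\rho\mu}$ is the shear impedance. The interior nodes carry frictional interface conditions (force balance and $\widehat\sigma=\alpha_k[\![\widehat v]\!]$), $\alpha_k=\infty$ meaning a locked (non-slipping) interface; the external boundaries carry the conditions $\frac{Z_s}{2}(1-r)v\mp\frac{1+r}{2}\sigma=0$ with reflection coefficients $r_0,r_L$. *)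

From Stdlib Require Import Reals Lra Arith ClassicalEpsilon.
Open Scope R_scope.

(** Riemann integral of f over [a,b] (0 if f is not Riemann integrable;
    all integrands in the theorem are continuous, hence integrable). *)
Definition Rint (f : R -> R) (a b : R) : R :=
  match excluded_middle_informative (inhabited (Riemann_integrable f a b)) with
  | left H => RiemannInt (epsilon H (fun _ => True))
  | right _ => 0
  end.

(** The derivative of g at y (0 if g is not differentiable at y). *)
Definition Deriv (g : R -> R) (y : R) : R :=
  match excluded_middle_informative (exists l, derivable_pt_lim g y l) with
  | left H => proj1_sig (constructive_indefinite_description _ H)
  | right _ => 0
  end.

Definition smooth1 (f : R -> R) : Prop :=
  exists D : nat -> R -> R, D O = f /\
    forall (n : nat) (y : R), derivable_pt_lim (D n) y (D (S n) y).

Definition cont2 (g : R -> R -> R) (y t : R) : Prop :=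
  forall eps, 0 < eps -> exists delta, 0 < delta /\
    forall y' t', Rabs (y' - y) < delta -> Rabs (t' - t) < delta ->
      Rabs (g y' t' - g y t) < eps.

(** C^infinity functions of two real variables (x,t): all partial derivatives
    D i j = d^i/dx^i d^j/dt^j f exist and are jointly continuous. *)
Definition smooth2 (f : R -> R -> R) : Prop :=
  exists D : nat -> nat -> R -> R -> R, D O O = f /\
    forall (i j : nat) (y t : R),
      derivable_pt_lim (fun z => D i j z t) y (D (S i) j y t) /\
      derivable_pt_lim (fun s => D i j y s) t (D i (S j) y t) /\
      cont2 (D i j) y t.

(** Finite sums: rsum n f = f 0 + ... + f (n-1);
    ssum a b f = sum_{k=a}^{b} f k (empty if b < a). *)
Fixpoint rsum (n : nat) (f : nat -> R) : R :=
  match n with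
  | O => 0
  | S m => rsum m f + f m
  end.

Definition ssum (a b : nat) (f : nat -> R) : R :=
  rsum (b + 1 - a) (fun i => f (a + i)%nat).

(** Frictional strength in [0, +infinity]: RInf means a locked interface. *)
Inductive Rinf : Type :=
  | RFin : R -> Rinf
  | RInf : Rinf.

Definition strength_nonneg (a : Rinf) : Prop :=
  match a with RFin a => 0 <= a | RInf => True end.

(** Every definition below takes the same parameters:
   K (number of elements), r0 rL (reflection coefficients), alpha (strengths at
   interior nodes), x (nodes x 1 < ... < x (K+1)), rho mu (material functions of
   element k), v sig (velocity / stress on element k, functions of (x,t)).
   Traces: v k (x k) t is v(x_k^+) and v k (x (k+1)) t is v(x_{k+1}^-),
   both taken from element e^k = [x k, x (k+1)]. *)

Section Data.
Variables (K : nat) (r0 rL : R) (alpha : nat -> Rinf) (x : nat -> R)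
  (rho mu : nat -> R -> R) (v sig : nat -> R -> R -> R).

Definition Zs (k : nat) (y : R) : R := sqrt (rho k y * mu k y).

(** Interior node k (2 <= k <= K), between elements k-1 and k. *)
Definition Zm (k : nat) : R := Zs (k - 1) (x k).
Definition Zp (k : nat) : R := Zs k (x k).
Definition qm (k : nat) (t : R) : R :=
  / 2 * (Zm k * v (k - 1) (x k) t - sig (k - 1) (x k) t).
Definition pp (k : nat) (t : R) : R :=
  / 2 * (Zp k * v k (x k) t + sig k (x k) t).
Definition eta (k : nat) : R := Zm k * Zp k / (Zm k + Zp k).
Definition Phi (k : nat) (t : R) : R :=
  eta k * (2 / Zp k * pp k t - 2 / Zm k * qm k t).
Definition shat_node (k : nat) (t : R) : R :=
  match alpha k with
  | RFin a => a / (eta k + a) * Phi k t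
  | RInf => Phi k t
  end.
Definition diss_node (k : nat) (t : R) : R :=
  match alpha k with
  | RFin a => a / (eta k + a) ^ 2 * (Phi k t) ^ 2
  | RInf => 0
  end.

Definition p0 (t : R) : R := / 2 * (Zs 1 (x 1) * v 1 (x 1) t + sig 1 (x 1) t).
Definition qL (t : R) : R :=
  / 2 * (Zs K (x (K + 1)) * v K (x (K + 1)) t - sig K (x (K + 1)) t).

Definition vhat_plus (k : nat) (t : R) : R :=
  if Nat.eqb k 1 then (1 + r0) / Zs 1 (x 1) * p0 t
  else (2 * pp k t - shat_node k t) / Zp k.
Definition shat_plus (k : nat) (t : R) : R :=
  if Nat.eqb k 1 then (1 - r0) * p0 t else shat_node k t.

Definition vhat_minus (k : nat) (t : R) : R :=
  if Nat.eqb k K then (1 + rL) / Zs K (x (K + 1)) * qL t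
  else (2 * qm (k + 1) t + shat_node (k + 1) t) / Zm (k + 1).
Definition shat_minus (k : nat) (t : R) : R :=
  if Nat.eqb k K then - ((1 - rL) * qL t) else shat_node (k + 1) t.

Definition Fflux (k : nat) (t : R) : R :=
  Zs k (x k) / 2 * (v k (x k) t - vhat_plus k t)
  - / 2 * (sig k (x k) t - shat_plus k t).
Definition Gflux (k : nat) (t : R) : R :=
  Zs k (x (k + 1)) / 2 * (v k (x (k + 1)) t - vhat_minus k t)
  + / 2 * (sig k (x (k + 1)) t - shat_minus k t).

(** Weak-form residuals for test functions phiv, phis (phi k = restriction to e^k). *)
Definition weak_v (phiv : nat -> R -> R) (t : R) : R :=
  ssum 1 K (fun k =>
    Rint (fun y => rho k y * phiv k y * Deriv (fun s => v k y s) t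
                   - phiv k y * Deriv (fun z => sig k z t) y) (x k) (x (k + 1))
    + phiv k (x k) * Fflux k t + phiv k (x (k + 1)) * Gflux k t).
Definition weak_sig (phis : nat -> R -> R) (t : R) : R :=
  ssum 1 K (fun k =>
    Rint (fun y => / mu k y * phis k y * Deriv (fun s => sig k y s) t
                   - phis k y * Deriv (fun z => v k z t) y) (x k) (x (k + 1))
    - phis k (x k) / Zs k (x k) * Fflux k t
    + phis k (x (k + 1)) / Zs k (x (k + 1)) * Gflux k t).

Definition Energy (t : R) : R :=
  ssum 1 K (fun k => / 2 * Rint (fun y => rho k y * (v k y t) ^ 2
                                     + / mu k y * (sig k y t) ^ 2) (x k) (x (k + 1))).

Definition energy_rate (t : R) : R :=
  - ssum 1 K (fun k => (Fflux k t) ^ 2 / Zs k (x k)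
                       + (Gflux k t) ^ 2 / Zs k (x (k + 1)))
  - ssum 2 K (fun k => diss_node k t)
  - (1 - r0 ^ 2) / Zs 1 (x 1) * (p0 t) ^ 2
  - (1 - rL ^ 2) / Zs K (x (K + 1)) * (qL t) ^ 2.

End Data.

(* Testing the weak form at time t with the solution itself, (phi_v, phi_sig) = (v, sig),
   turns its volume terms into dE/dt except for int d_x (v sig), which integrates to the
   jump of v sig across each element.  So dE/dt is a sum of contributions of the nodes,
   each an algebraic identity in the traces: at x_1 and x_(K+1) one gets
   -F^2/Z - (1 - r^2) p^2/Z, and at an interior node the right end of element k-1 and the
   left end of element k together give -(G^2/Z^- + F^2/Z^+) - alpha/(eta+alpha)^2 Phi^2. *)

From Stdlib Require Import Reals Lra Lia ClassicalEpsilon FunctionalExtensionality.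
From Coquelicot Require Import Coquelicot.
Open Scope R_scope.

Lemma Deriv_eq (g : R -> R) y l : derivable_pt_lim g y l -> Deriv g y = l.
Proof.
  intro H. unfold Deriv.
  destruct (excluded_middle_informative _) as [Hex | Hnex].
  - destruct (constructive_indefinite_description _ _) as [l' Hl']; simpl.
    exact (uniqueness_limite g y l' l Hl' H).
  - exfalso. apply Hnex. now exists l.
Qed.

Lemma Rint_RInt (f : R -> R) a b : ex_RInt f a b -> Rint f a b = RInt f a b.
Proof.
  intro H. unfold Rint.
  destruct (excluded_middle_informative _) as [Hint | Hnint].
  - symmetry. apply RInt_Reals.
  - exfalso. apply Hnint. constructor. now apply ex_RInt_Reals_0.
Qed.

Lemma Rint_ext (f g : R -> R) a b : (forall y, f y = g y) -> Rint f a b = Rint g a b.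
Proof. intro H. now rewrite (functional_extensionality f g H). Qed.

Lemma Rint_plus (f g : R -> R) a b : ex_RInt f a b -> ex_RInt g a b ->
  Rint (fun y => f y + g y) a b = Rint f a b + Rint g a b.
Proof.
  intros Hf Hg.
  rewrite !Rint_RInt by (try apply (ex_RInt_plus f g); assumption).
  exact (RInt_plus f g a b Hf Hg).
Qed.

Lemma Rint_scal (f : R -> R) c a b : ex_RInt f a b ->
  Rint (fun y => c * f y) a b = c * Rint f a b.
Proof.
  intro Hf.
  rewrite !Rint_RInt.
  - exact (@RInt_scal R_CompleteNormedModule f a b c Hf).
  - exact Hf.
  - exact (@ex_RInt_scal R_CompleteNormedModule f a b c Hf).
Qed.

(* Instances on R of Coquelicot's generic lemmas, which do not unify with [Rplus],
   [Rmult] directly. *)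
Lemma continuous_Rplus (f g : R -> R) y :
  continuous f y -> continuous g y -> continuous (fun z => f z + g z) y.
Proof. intros; now apply (@continuous_plus R_UniformSpace R_AbsRing R_NormedModule f g y). Qed.

Lemma continuous_Rminus (f g : R -> R) y :
  continuous f y -> continuous g y -> continuous (fun z => f z - g z) y.
Proof. intros; now apply (@continuous_minus R_UniformSpace R_AbsRing R_NormedModule f g y). Qed.

Lemma continuous_Rmult (f g : R -> R) y :
  continuous f y -> continuous g y -> continuous (fun z => f z * g z) y.
Proof. intros; now apply (@continuous_mult R_UniformSpace R_AbsRing f g y). Qed.

Lemma continuous_Rsqr (f : R -> R) y : continuous f y -> continuous (fun z => f z ^ 2) y.
Proof.
  intro H. apply (continuous_ext (fun z => f z * f z)); [intro; simpl; ring |].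
  now apply continuous_Rmult.
Qed.

Lemma derivable_pt_lim_continuous (f : R -> R) y l : derivable_pt_lim f y l -> continuous f y.
Proof.
  intro H. apply (@ex_derive_continuous R_AbsRing R_NormedModule).
  exists l. now apply is_derive_Reals.
Qed.

Lemma ex_RInt_continuous_le (f : R -> R) a b : a <= b ->
  (forall y, a <= y <= b -> continuous f y) -> ex_RInt f a b.
Proof.
  intros Hab H. apply (@ex_RInt_continuous R_CompleteNormedModule).
  now rewrite Rmin_left, Rmax_right.
Qed.

Lemma continuity_2d_pt_continuous_r (g : R -> R -> R) u y :
  continuity_2d_pt g u y -> continuous (g u) y.
Proof.
  intro H. apply continuity_pt_filterlim.
  intros eps Heps. destruct (H (mkposreal eps Heps)) as [delta Hdelta].
  exists delta. split; [apply cond_pos |].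
  intros z [_ Hz]. apply Hdelta; [| exact Hz].
  rewrite Rminus_eq_0, Rabs_R0. apply cond_pos.
Qed.

Lemma continuity_2d_pt_of_continuous (f : R -> R) u y :
  continuous f y -> continuity_2d_pt (fun _ z => f z) u y.
Proof.
  intro H. apply (continuity_1d_2d_pt_comp f (fun _ z => z)).
  - now apply continuity_pt_filterlim.
  - apply continuity_2d_pt_id2.
Qed.

Lemma cont2_continuity_2d_pt (g : R -> R -> R) y t :
  cont2 g y t -> continuity_2d_pt (fun u z => g z u) t y.
Proof.
  intros H eps. destruct (H eps (cond_pos eps)) as [delta [Hdelta Hg]].
  exists (mkposreal delta Hdelta). intros u z Hu Hz. now apply Hg.
Qed.

Lemma cont2_continuous_l (g : R -> R -> R) y t : cont2 g y t -> continuous (fun z => g z t) y.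
Proof.
  intro H. apply (continuity_2d_pt_continuous_r (fun u z => g z u)).
  now apply cont2_continuity_2d_pt.
Qed.

Lemma Rint_param_derivable (f df : R -> R -> R) a b t : a <= b ->
  (forall u y, derivable_pt_lim (fun s => f s y) u (df u y)) ->
  (forall y, a <= y <= b -> continuity_2d_pt df t y) ->
  (forall u, ex_RInt (f u) a b) ->
  derivable_pt_lim (fun u => Rint (f u) a b) t (Rint (df t) a b).
Proof.
  intros Hab Hf Hdf Hint.
  assert (HD : forall u y, Derive (fun s => f s y) u = df u y)
    by (intros; apply is_derive_unique, is_derive_Reals, Hf).
  rewrite Rint_RInt.
  2: { apply ex_RInt_continuous_le; [exact Hab |].
       intros y Hy. now apply continuity_2d_pt_continuous_r, Hdf. }
  apply is_derive_Reals.
  apply is_derive_ext with (fun u => RInt (f u) a b).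
  { intro u. symmetry. apply Rint_RInt, Hint. }
  rewrite (RInt_ext (df t) (fun y => Derive (fun u => f u y) t)) by (intros; now rewrite HD).
  apply is_derive_RInt_param.
  - apply filter_forall. intros u y _. exists (df u y). apply is_derive_Reals, Hf.
  - rewrite Rmin_left, Rmax_right by exact Hab. intros y Hy.
    apply continuity_2d_pt_ext with df; [intros; now rewrite HD | now apply Hdf].
  - apply filter_forall. exact Hint.
Qed.

Lemma Rint_product_rule (f g df dg : R -> R) a b : a <= b ->
  (forall y, derivable_pt_lim f y (df y)) -> (forall y, derivable_pt_lim g y (dg y)) ->
  (forall y, continuous df y) -> (forall y, continuous dg y) ->
  Rint (fun y => df y * g y + f y * dg y) a b = f b * g b - f a * g a.
Proof.
  intros Hab Hf Hg Hdf Hdg.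
  assert (H : is_RInt (fun y => df y * g y + f y * dg y) a b (f b * g b - f a * g a)).
  { apply (@is_RInt_derive R_CompleteNormedModule (fun y => f y * g y)).
    - intros y _. apply (@is_derive_mult R_AbsRing f g); try apply is_derive_Reals; auto.
      intros; apply Rmult_comm.
    - intros y _. apply continuous_Rplus; apply continuous_Rmult; auto;
        eapply derivable_pt_lim_continuous; eauto. }
  rewrite Rint_RInt by (eexists; exact H).
  now apply is_RInt_unique.
Qed.

Section ElementEnergy.
Variables (rho mu : R -> R) (V Vx Vt S Sx St : R -> R -> R) (a b : R).
Hypothesis Hab : a <= b.
Hypothesis Hrho : forall y, continuous rho y.
Hypothesis Hmu : forall y, continuous mu y.
Hypothesis Hmu_pos : forall y, a <= y <= b -> 0 < mu y.
Hypothesis HVx : forall y t, derivable_pt_lim (fun z => V z t) y (Vx y t).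
Hypothesis HVt : forall y t, derivable_pt_lim (fun s => V y s) t (Vt y t).
Hypothesis HSx : forall y t, derivable_pt_lim (fun z => S z t) y (Sx y t).
Hypothesis HSt : forall y t, derivable_pt_lim (fun s => S y s) t (St y t).
Hypothesis HcV : forall y t, cont2 V y t.
Hypothesis HcVx : forall y t, cont2 Vx y t.
Hypothesis HcVt : forall y t, cont2 Vt y t.
Hypothesis HcS : forall y t, cont2 S y t.
Hypothesis HcSx : forall y t, cont2 Sx y t.
Hypothesis HcSt : forall y t, cont2 St y t.

Lemma inv_mu_continuous y : a <= y <= b -> continuous (fun z => / mu z) y.
Proof.
  intro Hy. apply continuous_Rinv_comp; [apply Hmu |].
  specialize (Hmu_pos y Hy). lra.
Qed.

(* Dispatch on the syntax of the integrand: a blind [apply] of the lemmas above to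
   [/ mu z] makes unification unfold [Rinv]. *)
Local Ltac integrable :=
  apply ex_RInt_continuous_le; [exact Hab |]; intros ? ?;
  repeat match goal with
  | |- continuous (fun _ => ?c) _ => apply (@continuous_const R_UniformSpace R_UniformSpace)
  | |- continuous (fun _ => _ ^ 2) _ => apply continuous_Rsqr
  | |- continuous (fun _ => _ + _) _ => apply continuous_Rplus
  | |- continuous (fun _ => _ - _) _ => apply continuous_Rminus
  | |- continuous (fun _ => _ * _) _ => apply continuous_Rmult
  | |- continuous (fun _ => / _) _ => apply inv_mu_continuous; assumption
  | |- continuous rho _ => apply Hrho
  | |- _ => apply cont2_continuous_l; auto
  end.

Lemma energy_density_derivable y u :
  derivable_pt_lim (fun s => / 2 * (rho y * V y s ^ 2 + / mu y * S y s ^ 2)) u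
    (rho y * V y u * Vt y u + / mu y * S y u * St y u).
Proof.
  assert (DV : Derive (fun s => V y s) u = Vt y u)
    by apply is_derive_unique, is_derive_Reals, HVt.
  assert (DS : Derive (fun s => S y s) u = St y u)
    by apply is_derive_unique, is_derive_Reals, HSt.
  apply is_derive_Reals. auto_derive.
  - split; [exists (Vt y u) | split; [exists (St y u) | exact I]];
      apply is_derive_Reals; auto.
  - rewrite DV, DS.
    (* otherwise [field] asks for [mu y <> 0] *)
    set (m := / mu y). field.
Qed.

Lemma half_energy_derivable t :
  derivable_pt_lim (fun s => / 2 * Rint (fun y => rho y * V y s ^ 2 + / mu y * S y s ^ 2) a b) t
    (Rint (fun y => rho y * V y t * Vt y t + / mu y * S y t * St y t) a b).
Proof.
  apply derivable_pt_lim_ext with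
    (fun s => Rint (fun y => / 2 * (rho y * V y s ^ 2 + / mu y * S y s ^ 2)) a b).
  { intro s. apply Rint_scal. integrable. }
  apply (Rint_param_derivable (fun s y => / 2 * (rho y * V y s ^ 2 + / mu y * S y s ^ 2))
           (fun u y => rho y * V y u * Vt y u + / mu y * S y u * St y u) a b t Hab).
  - intros u y. apply energy_density_derivable.
  - intros y Hy.
    repeat first [ apply continuity_2d_pt_plus | apply continuity_2d_pt_mult ];
      first [ apply continuity_2d_pt_of_continuous; first [apply Hrho | now apply inv_mu_continuous]
            | apply cont2_continuity_2d_pt; auto ].
  - intro u. integrable.
Qed.

Lemma element_energy_balance t :
  derivable_pt_lim (fun s => / 2 * Rint (fun y => rho y * V y s ^ 2 + / mu y * S y s ^ 2) a b) t
    (Rint (fun y => rho y * V y t * Vt y t - V y t * Sx y t) a b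
     + Rint (fun y => / mu y * S y t * St y t - S y t * Vx y t) a b
     + (V b t * S b t - V a t * S a t)).
Proof.
  rewrite <- (Rint_product_rule (fun y => V y t) (fun y => S y t)
                (fun y => Vx y t) (fun y => Sx y t)) by
    first [exact Hab | intro y; first [apply HVx | apply HSx]
          | intro y; apply cont2_continuous_l; auto].
  rewrite <- !Rint_plus by integrable.
  rewrite (Rint_ext _ (fun y => rho y * V y t * Vt y t + / mu y * S y t * St y t))
    by (intro; ring).
  apply half_energy_derivable.
Qed.

End ElementEnergy.

Lemma smooth1_continuous (f : R -> R) y : smooth1 f -> continuous f y.
Proof.
  intros [D [D0 HD]]. subst f. exact (derivable_pt_lim_continuous _ _ _ (HD O y)).
Qed.

Lemma smooth2_slice (w : R -> R -> R) t : smooth2 w -> smooth1 (fun y => w y t).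
Proof.
  intros [D [D0 HD]]. exists (fun n y => D n O y t). split.
  - now rewrite D0.
  - intros n y. apply HD.
Qed.

Lemma smooth2_C1 (w : R -> R -> R) : smooth2 w ->
  (forall y t, derivable_pt_lim (fun z => w z t) y (Deriv (fun z => w z t) y)) /\
  (forall y t, derivable_pt_lim (fun s => w y s) t (Deriv (fun s => w y s) t)) /\
  (forall y t, cont2 w y t) /\
  (forall y t, cont2 (fun y t => Deriv (fun z => w z t) y) y t) /\
  (forall y t, cont2 (fun y t => Deriv (fun s => w y s) t) y t).
Proof.
  intros [D [D0 HD]]. subst w.
  assert (Dx : forall y t, Deriv (fun z => D O O z t) y = D 1%nat O y t)
    by (intros; apply Deriv_eq, HD).
  assert (Dt : forall y t, Deriv (fun s => D O O y s) t = D O 1%nat y t)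
    by (intros; apply Deriv_eq, HD).
  assert (Ex : (fun y t => Deriv (fun z => D O O z t) y) = D 1%nat O)
    by (do 2 (apply functional_extensionality; intro); apply Dx).
  assert (Et : (fun y t => Deriv (fun s => D O O y s) t) = D O 1%nat)
    by (do 2 (apply functional_extensionality; intro); apply Dt).
  rewrite Ex, Et.
  repeat split; intros; rewrite ?Dx, ?Dt; apply HD.
Qed.

Lemma element_energy_derivable (rho mu : R -> R) (v sig : R -> R -> R) a b t :
  a <= b -> smooth1 rho -> smooth1 mu -> (forall y, a <= y <= b -> 0 < mu y) ->
  smooth2 v -> smooth2 sig ->
  derivable_pt_lim (fun s => / 2 * Rint (fun y => rho y * v y s ^ 2 + / mu y * sig y s ^ 2) a b) t
    (Rint (fun y => rho y * v y t * Deriv (fun s => v y s) t - v y t * Deriv (fun z => sig z t) y) a b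
     + Rint (fun y => / mu y * sig y t * Deriv (fun s => sig y s) t - sig y t * Deriv (fun z => v z t) y) a b
     + (v b t * sig b t - v a t * sig a t)).
Proof.
  intros Hab Hrho Hmu Hmu_pos Hv Hsig.
  destruct (smooth2_C1 v Hv) as (Hvx & Hvt & Hcv & Hcvx & Hcvt).
  destruct (smooth2_C1 sig Hsig) as (Hsx & Hst & Hcs & Hcsx & Hcst).
  apply (element_energy_balance rho mu
           v (fun y t => Deriv (fun z => v z t) y) (fun y t => Deriv (fun s => v y s) t)
           sig (fun y t => Deriv (fun z => sig z t) y) (fun y t => Deriv (fun s => sig y s) t));
    auto; intro y; now apply smooth1_continuous.
Qed.

Lemma rsum_ext n (f g : nat -> R) : (forall i, (i < n)%nat -> f i = g i) -> rsum n f = rsum n g.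
Proof.
  induction n as [| n IH]; intro H; simpl; [reflexivity |].
  rewrite IH by (intros; apply H; lia). rewrite H by lia. reflexivity.
Qed.

Lemma rsum_plus n (f g : nat -> R) : rsum n (fun i => f i + g i) = rsum n f + rsum n g.
Proof. induction n as [| n IH]; simpl; [ring | rewrite IH; ring]. Qed.

Lemma rsum_opp n (f : nat -> R) : rsum n (fun i => - f i) = - rsum n f.
Proof. induction n as [| n IH]; simpl; [ring | rewrite IH; ring]. Qed.

Lemma rsum_minus n (f g : nat -> R) : rsum n (fun i => f i - g i) = rsum n f - rsum n g.
Proof. induction n as [| n IH]; simpl; [ring | rewrite IH; ring]. Qed.

Lemma rsum_nonneg n (f : nat -> R) : (forall i, (i < n)%nat -> 0 <= f i) -> 0 <= rsum n f.
Proof.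
  induction n as [| n IH]; intro H; simpl; [lra |].
  assert (0 <= rsum n f) by (apply IH; intros; apply H; lia).
  assert (0 <= f n) by (apply H; lia). lra.
Qed.

Lemma derivable_rsum n (g : nat -> R -> R) (d : nat -> R) t :
  (forall i, (i < n)%nat -> derivable_pt_lim (g i) t (d i)) ->
  derivable_pt_lim (fun s => rsum n (fun i => g i s)) t (rsum n d).
Proof.
  induction n as [| n IH]; intro H; simpl.
  - apply derivable_pt_lim_const.
  - apply (derivable_pt_lim_plus (fun s => rsum n (fun i => g i s)) (g n)).
    + apply IH. intros; apply H; lia.
    + apply H; lia.
Qed.

Lemma rsum_regroup n a (A B : nat -> R) :
  rsum (S n) (fun i => A (a + i)%nat + B (a + i)%nat) =
  A a + B (a + n)%nat + rsum n (fun i => B (a + i)%nat + A (S a + i)%nat).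
Proof.
  induction n as [| n IH].
  - simpl. rewrite Nat.add_0_r. ring.
  - change (rsum (S (S n)) ?f) with (rsum (S n) f + f (S n)).
    rewrite IH. simpl rsum.
    replace (a + S n)%nat with (S (a + n)) by lia.
    change (S a + n)%nat with (S (a + n)). ring.
Qed.

Lemma ssum_ext a b (f g : nat -> R) :
  (forall k, (a <= k <= b)%nat -> f k = g k) -> ssum a b f = ssum a b g.
Proof. intro H. apply rsum_ext. intros i Hi. apply H. lia. Qed.

Lemma ssum_plus a b (f g : nat -> R) : ssum a b (fun k => f k + g k) = ssum a b f + ssum a b g.
Proof. apply rsum_plus. Qed.

Lemma ssum_opp a b (f : nat -> R) : ssum a b (fun k => - f k) = - ssum a b f.
Proof. apply rsum_opp. Qed.

Lemma ssum_minus a b (f g : nat -> R) : ssum a b (fun k => f k - g k) = ssum a b f - ssum a b g.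
Proof. apply rsum_minus. Qed.

Lemma ssum_nonneg a b (f : nat -> R) :
  (forall k, (a <= k <= b)%nat -> 0 <= f k) -> 0 <= ssum a b f.
Proof. intro H. apply rsum_nonneg. intros i Hi. apply H. lia. Qed.

Lemma derivable_ssum a b (g : nat -> R -> R) (d : nat -> R) t :
  (forall k, (a <= k <= b)%nat -> derivable_pt_lim (g k) t (d k)) ->
  derivable_pt_lim (fun s => ssum a b (fun k => g k s)) t (ssum a b d).
Proof.
  intro H. apply (derivable_rsum _ (fun i => g (a + i)%nat)). intros i Hi. apply H. lia.
Qed.

Lemma ssum_regroup a b (A B : nat -> R) : (a <= b)%nat ->
  ssum a b (fun k => A k + B k) = A a + B b + ssum (S a) b (fun k => B (k - 1)%nat + A k).
Proof.
  intro Hab. unfold ssum.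
  replace (b + 1 - a)%nat with (S (b - a)) by lia.
  replace (b + 1 - S a)%nat with (b - a)%nat by lia.
  rewrite rsum_regroup. replace (a + (b - a))%nat with b by lia.
  f_equal. apply rsum_ext. intros i Hi. now replace (S a + i - 1)%nat with (a + i)%nat by lia.
Qed.

Section EnergyBalance.
Variables (K : nat) (r0 rL : R) (alpha : nat -> Rinf) (x : nat -> R)
  (rho mu : nat -> R -> R) (v sig : nat -> R -> R -> R) (t : R).
Hypothesis HK : (1 <= K)%nat.
Hypothesis Hx : forall k, (1 <= k <= K)%nat -> x k < x (k + 1)%nat.
Hypothesis Hrho_s : forall k, (1 <= k <= K)%nat -> smooth1 (rho k).
Hypothesis Hmu_s : forall k, (1 <= k <= K)%nat -> smooth1 (mu k).
Hypothesis Hrho_p : forall k, (1 <= k <= K)%nat ->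
  forall y, x k <= y <= x (k + 1)%nat -> 0 < rho k y.
Hypothesis Hmu_p : forall k, (1 <= k <= K)%nat ->
  forall y, x k <= y <= x (k + 1)%nat -> 0 < mu k y.
Hypothesis Hv_s : forall k, (1 <= k <= K)%nat -> smooth2 (v k).
Hypothesis Hsig_s : forall k, (1 <= k <= K)%nat -> smooth2 (sig k).
Hypothesis Hr0 : -1 <= r0 <= 1.
Hypothesis HrL : -1 <= rL <= 1.
Hypothesis Halpha : forall k, (2 <= k <= K)%nat -> strength_nonneg (alpha k).

Local Notation Z := (Zs rho mu).
Local Notation F k := (Fflux r0 alpha x rho mu v sig k t).
Local Notation G k := (Gflux K rL alpha x rho mu v sig k t).

(* What the ends of element k contribute to dE/dt once the weak form, tested
   with (v, sig) itself, has been subtracted. *)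
Definition left_end_rate (k : nat) : R :=
  - (v k (x k) t * sig k (x k) t) - v k (x k) t * F k + sig k (x k) t / Z k (x k) * F k.
Definition right_end_rate (k : nat) : R :=
  v k (x (k + 1)%nat) t * sig k (x (k + 1)%nat) t - v k (x (k + 1)%nat) t * G k
  - sig k (x (k + 1)%nat) t / Z k (x (k + 1)%nat) * G k.

Lemma Zs_left_pos k : (1 <= k <= K)%nat -> 0 < Z k (x k).
Proof.
  intro Hk. specialize (Hx k Hk).
  apply sqrt_lt_R0, Rmult_lt_0_compat; [apply Hrho_p | apply Hmu_p]; auto; lra.
Qed.

Lemma Zs_right_pos k : (1 <= k <= K)%nat -> 0 < Z k (x (k + 1)%nat).
Proof.
  intro Hk. specialize (Hx k Hk).
  apply sqrt_lt_R0, Rmult_lt_0_compat; [apply Hrho_p | apply Hmu_p]; auto; lra.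
Qed.

Lemma left_boundary_rate :
  left_end_rate 1 = - (F 1%nat ^ 2 / Z 1%nat (x 1%nat))
                    - (1 - r0 ^ 2) / Z 1%nat (x 1%nat) * p0 x rho mu v sig t ^ 2.
Proof.
  assert (HZ := Zs_left_pos 1 ltac:(lia)).
  unfold left_end_rate, Fflux, vhat_plus, shat_plus, p0. simpl Nat.eqb. cbv iota.
  field. lra.
Qed.

Lemma right_boundary_rate :
  right_end_rate K = - (G K ^ 2 / Z K (x (K + 1)%nat))
                     - (1 - rL ^ 2) / Z K (x (K + 1)%nat) * qL K x rho mu v sig t ^ 2.
Proof.
  assert (HZ := Zs_right_pos K ltac:(lia)).
  unfold right_end_rate, Gflux, vhat_minus, shat_minus, qL. rewrite Nat.eqb_refl.
  field. lra.
Qed.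

Lemma interface_rate k : (2 <= k <= K)%nat ->
  right_end_rate (k - 1) + left_end_rate k
  = - (G (k - 1)%nat ^ 2 / Z (k - 1)%nat (x (k - 1 + 1)%nat) + F k ^ 2 / Z k (x k))
    - diss_node alpha x rho mu v sig k t.
Proof.
  intro Hk.
  assert (Hm := Zs_right_pos (k - 1) ltac:(lia)).
  assert (Hp := Zs_left_pos k ltac:(lia)).
  assert (Ha := Halpha k Hk).
  assert (E1 : Nat.eqb (k - 1) K = false) by (apply Nat.eqb_neq; lia).
  assert (E2 : Nat.eqb k 1 = false) by (apply Nat.eqb_neq; lia).
  unfold right_end_rate, left_end_rate, Gflux, Fflux, vhat_minus, shat_minus, vhat_plus, shat_plus.
  rewrite E1, E2.
  replace (k - 1 + 1)%nat with k in Hm |- * by lia.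
  unfold shat_node, diss_node, Phi, eta, qm, pp, Zm, Zp.
  unfold strength_nonneg in Ha.
  destruct (alpha k) as [a |].
  - assert (0 < Z (k - 1)%nat (x k) * Z k (x k) / (Z (k - 1)%nat (x k) + Z k (x k)))
      by (apply Rdiv_lt_0_compat; nra).
    field. repeat split; nra.
  - field. lra.
Qed.

Lemma end_rates_sum :
  ssum 1 K (fun k => left_end_rate k + right_end_rate k)
  = energy_rate K r0 rL alpha x rho mu v sig t.
Proof.
  assert (Hinterface :
    ssum 2 K (fun k => right_end_rate (k - 1) + left_end_rate k)
    = - ssum 2 K (fun k => G (k - 1)%nat ^ 2 / Z (k - 1)%nat (x (k - 1 + 1)%nat)
                           + F k ^ 2 / Z k (x k))
      - ssum 2 K (fun k => diss_node alpha x rho mu v sig k t)).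
  { rewrite <- ssum_opp, <- ssum_minus.
    apply ssum_ext. intros k Hk. now apply interface_rate. }
  unfold energy_rate.
  rewrite (ssum_regroup 1 K left_end_rate), (ssum_regroup 1 K (fun k => F k ^ 2 / Z k (x k)))
    by exact HK.
  rewrite Hinterface, left_boundary_rate, right_boundary_rate. ring.
Qed.

Lemma energy_rate_nonpos : energy_rate K r0 rL alpha x rho mu v sig t <= 0.
Proof.
  assert (HF : 0 <= ssum 1 K (fun k => F k ^ 2 / Z k (x k) + G k ^ 2 / Z k (x (k + 1)%nat))).
  { apply ssum_nonneg. intros k Hk.
    assert (Hl := Zs_left_pos k Hk). assert (Hr := Zs_right_pos k Hk).
    apply Rplus_le_le_0_compat; apply Rdiv_le_0_compat; nra. }
  assert (Hdiss : 0 <= ssum 2 K (fun k => diss_node alpha x rho mu v sig k t)).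
  { apply ssum_nonneg. intros k Hk. unfold diss_node.
    assert (Ha := Halpha k Hk). unfold strength_nonneg in Ha.
    destruct (alpha k) as [a |]; [| lra].
    assert (Hm := Zs_right_pos (k - 1) ltac:(lia)).
    assert (Hp := Zs_left_pos k ltac:(lia)).
    replace (k - 1 + 1)%nat with k in Hm by lia.
    assert (0 < eta x rho mu k) by (apply Rdiv_lt_0_compat; unfold Zm, Zp; nra).
    apply Rmult_le_pos; [apply Rdiv_le_0_compat | apply pow2_ge_0]; nra. }
  assert (H1 := Zs_left_pos 1 ltac:(lia)). assert (HK' := Zs_right_pos K ltac:(lia)).
  assert (0 <= (1 - r0 ^ 2) / Z 1%nat (x 1%nat) * p0 x rho mu v sig t ^ 2)
    by (apply Rmult_le_pos; [apply Rdiv_le_0_compat | apply pow2_ge_0]; nra).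
  assert (0 <= (1 - rL ^ 2) / Z K (x (K + 1)%nat) * qL K x rho mu v sig t ^ 2)
    by (apply Rmult_le_pos; [apply Rdiv_le_0_compat | apply pow2_ge_0]; nra).
  unfold energy_rate. lra.
Qed.

Lemma Energy_derivable_weak :
  derivable_pt_lim (Energy K x rho mu v sig) t
    (weak_v K r0 rL alpha x rho mu v sig (fun k y => v k y t) t
     + weak_sig K r0 rL alpha x rho mu v sig (fun k y => sig k y t) t
     + ssum 1 K (fun k => left_end_rate k + right_end_rate k)).
Proof.
  unfold Energy, weak_v, weak_sig. rewrite <- !ssum_plus.
  apply derivable_ssum. intros k Hk.
  assert (Hmu_k := Hmu_p k Hk). specialize (Hx k Hk).
  match goal with |- derivable_pt_lim _ _ ?l =>
    replace l with
      (Rint (fun y => rho k y * v k y t * Deriv (fun s => v k y s) t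
                      - v k y t * Deriv (fun z => sig k z t) y) (x k) (x (k + 1)%nat)
       + Rint (fun y => / mu k y * sig k y t * Deriv (fun s => sig k y s) t
                        - sig k y t * Deriv (fun z => v k z t) y) (x k) (x (k + 1)%nat)
       + (v k (x (k + 1)%nat) t * sig k (x (k + 1)%nat) t - v k (x k) t * sig k (x k) t))
      by (unfold left_end_rate, right_end_rate; ring)
  end.
  apply element_energy_derivable; auto; lra.
Qed.

End EnergyBalance.

Theorem theorem1
  (K : nat) (L r0 rL : R) (alpha : nat -> Rinf) (x : nat -> R)
  (rho mu : nat -> R -> R) (v sig : nat -> R -> R -> R)
  (HK : (1 <= K)%nat)
  (Hx1 : x 1%nat = 0) (HxL : x (K + 1)%nat = L)
  (Hx : forall k : nat, (1 <= k <= K)%nat -> x k < x (k + 1)%nat)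
  (Hrho_s : forall k : nat, (1 <= k <= K)%nat -> smooth1 (rho k))
  (Hmu_s : forall k : nat, (1 <= k <= K)%nat -> smooth1 (mu k))
  (Hrho_p : forall k : nat, (1 <= k <= K)%nat ->
     forall y, x k <= y <= x (k + 1)%nat -> 0 < rho k y)
  (Hmu_p : forall k : nat, (1 <= k <= K)%nat ->
     forall y, x k <= y <= x (k + 1)%nat -> 0 < mu k y)
  (Hv_s : forall k : nat, (1 <= k <= K)%nat -> smooth2 (v k))
  (Hsig_s : forall k : nat, (1 <= k <= K)%nat -> smooth2 (sig k))
  (Hr0 : -1 <= r0 <= 1) (HrL : -1 <= rL <= 1)
  (Halpha : forall k : nat, (2 <= k <= K)%nat -> strength_nonneg (alpha k))
  (Hweak : forall t : R, 0 <= t ->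
     forall phiv phis : nat -> R -> R,
       (forall k : nat, (1 <= k <= K)%nat -> smooth1 (phiv k) /\ smooth1 (phis k)) ->
       weak_v K r0 rL alpha x rho mu v sig phiv t = 0 /\
       weak_sig K r0 rL alpha x rho mu v sig phis t = 0) :
  forall t : R, 0 <= t ->
    derivable_pt_lim (Energy K x rho mu v sig) t
      (energy_rate K r0 rL alpha x rho mu v sig t) /\
    energy_rate K r0 rL alpha x rho mu v sig t <= 0.
Proof.
  intros t Ht.
  destruct (Hweak t Ht (fun k y => v k y t) (fun k y => sig k y t)) as [Wv Wsig].
  { intros k Hk. split; apply smooth2_slice; auto. }
  split.
  - assert (HE := Energy_derivable_weak K r0 rL alpha x rho mu v sig t
                    Hx Hrho_s Hmu_s Hmu_p Hv_s Hsig_s).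
    rewrite Wv, Wsig, !Rplus_0_l,
      (end_rates_sum K r0 rL alpha x rho mu v sig t HK Hx Hrho_p Hmu_p Halpha) in HE.
    exact HE.
  - exact (energy_rate_nonpos K r0 rL alpha x rho mu v sig t HK Hx Hrho_p Hmu_p Hr0 HrL Halpha).
Qed.
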